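(* Let $F:\mathbb T^d\to\mathbb R^d$ and $u_0:\mathbb T^d\to[0,1]$ be $C^\infty$, and let $u$ be the solution of $\partial_tu=\Delta u-2\nabla\cdot(u(1-u)F)$ with $u(0,\cdot)=u_0$. Assume there exists $\varepsilon_0>0$ such that $\varepsilon_0\le u_0(x)\le1-\varepsilon_0$ for all $x\in\mathbb T^d$. Then for any $T>0$ there exists $\varepsilon_1>0$, depending only on $T$, $F$ and $\varepsilon_0$, such that $\varepsilon_1\le u(t,x)\le1-\varepsilon_1$ for all $x\in\mathbb T^d$ and $t\in[0,T]$.
   Context: $\mathbb T^d=\mathbb R^d/\mathbb Z^d$. *)

From HB Require Import structures.
From mathcomp Require Import all_boot all_order all_algebra.
From mathcomp Require Import all_classical all_reals all_analysis.
Set Implicit Arguments. Unset Strict Implicit. Unset Printing Implicit Defensive.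
Import Order.TTheory GRing.Theory Num.Theory.
Import numFieldNormedType.Exports.
Local Open Scope classical_set_scope.
Local Open Scope ring_scope.

Fixpoint Ck {R : realType} {V W : normedModType R} (k : nat) (f : V -> W) : Prop :=
  match k with
  | 0 => continuous f
  | k'.+1 => (forall x, differentiable f x) /\
             (forall v : V, Ck k' (fun x => derive f x v))
  end.

Definition smooth {R : realType} {V W : normedModType R} (f : V -> W) : Prop :=
  forall k, Ck k f.

Definition e_ {R : realType} {d : nat} (i : 'I_d) : 'rV[R]_d := delta_mx 0 i.

(* Z^d-periodicity: f descends to the torus T^d = R^d / Z^d *)
Definition Zd_periodic {R : realType} {d : nat} {W : Type} (f : 'rV[R]_d -> W) : Prop :=
  forall (x : 'rV[R]_d) (z : 'rV[int]_d), f (x + map_mx (fun n : int => n%:~R) z) = f x.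

Definition laplacian {R : realType} {d : nat} (f : 'rV[R]_d -> R) (x : 'rV[R]_d) : R :=
  \sum_(i < d) derive (fun y => derive f y (e_ i)) x (e_ i).

Definition divergence {R : realType} {d : nat} (G : 'rV[R]_d -> 'rV[R]_d) (x : 'rV[R]_d) : R :=
  \sum_(i < d) derive (fun y => G y 0 i) x (e_ i).

Definition is_solution {R : realType} {d : nat} (F : 'rV[R]_d -> 'rV[R]_d)
    (u0 : 'rV[R]_d -> R) (u : R -> 'rV[R]_d -> R) : Prop :=
  [/\ forall t, 0 <= t -> Zd_periodic (u t),
      {within [set p : R * 'rV[R]_d | 0 <= p.1], continuous (fun p => u p.1 p.2)},
      forall x, u 0 x = u0 x,
      forall t, 0 < t -> Ck 2 (u t) /\ forall x, derivable (fun s => u s x) t 1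
    & forall t x, 0 < t ->
      derive1 (fun s => u s x) t =
        laplacian (u t) x
        - 2 * divergence (fun y => (u t y * (1 - u t y)) *: F y) x].

From HB Require Import structures.
From mathcomp Require Import all_boot all_order all_algebra.
From mathcomp Require Import all_classical all_reals all_analysis.
From mathcomp Require Import lra ring.
Import Order.TTheory GRing.Theory Num.Theory.
Import numFieldNormedType.Exports.
Local Open Scope classical_set_scope.
Local Open Scope ring_scope.
Set Implicit Arguments.
Unset Strict Implicit.
Unset Printing Implicit Defensive.

(* Maximum principle.  At a spatial minimum x of u(t, .) the gradient of u vanishes and
   its Laplacian is nonnegative, so the equation reduces to
     d_t u >= -2 u (1 - u) div F >= -2 M u (1 - u),   M = max |div F|,
   whereas the barrier eps0/2 * exp (-(2 M + 1) t) decays strictly faster.  To compare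
   them, minimise w = exp (- lam t) (u - barrier) over [0, T] x [0, 1]^d; periodicity
   makes this a minimum in space as well.  A nonpositive minimum cannot occur at t = 0,
   and at t > 0 the one-sided inequality d_t w <= 0 contradicts the one above.  The
   upper bound is the same argument for 1 - u, whose minima are the maxima of u and at
   which div F enters with the opposite sign. *)

Section RealCalculus.
Context {R : realType}.

Lemma derive2_ge0_at_min (g : R -> R) c :
  (forall s, derivable g s 1) -> derivable ('D_1 g) c 1 ->
  (forall s, g c <= g s) -> 'D_1 g c = 0 /\ 0 <= 'D_1 ('D_1 g) c.
Proof.
move=> dg dg' gmin.
have g'c : 'D_1 g c = 0.
  apply: derive_val; apply: (@derive1_at_min _ g (c - 1) (c + 1)).
  - lra.
  - by move=> s _; exact: dg.
  - rewrite in_itv /=; apply/andP; split; lra.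
  - by move=> s _; exact: gmin.
split=> //; rewrite leNgt; apply/negP => g''_lt0.
have [e e_gt0 g'_lt0] : exists2 e, 0 < e & forall r, 0 < r < e -> 'D_1 g (r + c) < 0.
  have [e /= e_gt0 He] := cvgr_lt _ dg' _ g''_lt0.
  exists e => // r /andP [r_gt0 r_lte].
  have := He r; rewrite /ball_ /= sub0r normrN gtr0_norm // => /(_ r_lte (lt0r_neq0 r_gt0)).
  by rewrite /= g'c subr0 [r%:A]mulr1 pmulr_rlt0 ?invr_gt0.
have : g (c + e / 2) < g c.
  apply: (@ltr0_derive1_lt_cc _ g c (c + e / 2)); rewrite ?in_itv /=; try lra.
  - by move=> s _; exact: dg.
  - move=> s; rewrite in_itv /= => /andP [cs se]; rewrite derive1E.
    have -> : s = (s - c) + c by ring.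
    apply: g'_lt0; apply/andP; split; lra.
  - apply: continuous_subspaceT => s.
    exact/differentiable_continuous/derivable1_diffP.
by rewrite ltNge gmin.
Qed.

Lemma derive2_le0_at_max (g : R -> R) c :
  (forall s, derivable g s 1) -> derivable ('D_1 g) c 1 ->
  (forall s, g s <= g c) -> 'D_1 g c = 0 /\ 'D_1 ('D_1 g) c <= 0.
Proof.
move=> dg dg' gmax.
have D_opp : 'D_1 (- g) = - 'D_1 g by apply/funext => s; rewrite /= deriveN.
have [] := @derive2_ge0_at_min (- g) c (fun s => derivableN (dg s)).
- by rewrite D_opp; exact: derivableN.
- by move=> s; rewrite lerN2.
rewrite D_opp /= !deriveN // => /eqP; rewrite oppr_eq0 oppr_ge0 => /eqP.
by split.
Qed.

Lemma line_quotientE {V W : normedModType R} (f : V -> W) x v s :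
  (fun h : R => h^-1 *: (((fun r : R => f (r *: v + x)) \o shift s) (h *: 1) - f (s *: v + x)))
  = (fun h : R => h^-1 *: ((f \o shift (s *: v + x)) (h *: v) - f (s *: v + x))).
Proof. by apply/funext => h /=; rewrite /shift /= [h *: 1]mulr1 scalerDl addrA. Qed.

Lemma derivable_line {V W : normedModType R} (f : V -> W) x v s :
  derivable (fun r : R => f (r *: v + x)) s 1 <-> derivable f (s *: v + x) v.
Proof. by rewrite /derivable line_quotientE. Qed.

Lemma derive_line {V W : normedModType R} (f : V -> W) x v s :
  'D_1 (fun r : R => f (r *: v + x)) s = 'D_v f (s *: v + x).
Proof. by rewrite /derive /= line_quotientE. Qed.

Lemma derive2_line {V : normedModType R} (f : V -> R) x v :
  (forall y, differentiable f y) -> differentiable ('D_v f) x ->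
  [/\ forall s, derivable (fun r : R => f (r *: v + x)) s 1,
      derivable ('D_1 (fun r : R => f (r *: v + x))) 0 1 &
      'D_1 ('D_1 (fun r : R => f (r *: v + x))) 0 = 'D_v ('D_v f) x].
Proof.
move=> df ddf.
have D_line : 'D_1 (fun r : R => f (r *: v + x)) = fun r => 'D_v f (r *: v + x).
  by apply/funext => s; exact: derive_line.
split; first by move=> s; apply/derivable_line/diff_derivable.
- rewrite [X in derivable X]D_line; apply/(derivable_line ('D_v f)).
  by rewrite scale0r add0r; exact: diff_derivable.
- by rewrite [X in derive X]D_line (derive_line ('D_v f)) scale0r add0r.
Qed.

Lemma directional_derive2_ge0_at_min {V : normedModType R} (f : V -> R) x v :
  (forall y, differentiable f y) -> differentiable ('D_v f) x ->
  (forall y, f x <= f y) -> 'D_v f x = 0 /\ 0 <= 'D_v ('D_v f) x.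
Proof.
move=> df ddf fmin; have [dl ddl <-] := derive2_line df ddf.
have := @derive2_ge0_at_min (fun r : R => f (r *: v + x)) 0 dl ddl.
rewrite (derive_line f) !scale0r !add0r; apply=> s; exact: fmin.
Qed.

Lemma directional_derive2_le0_at_max {V : normedModType R} (f : V -> R) x v :
  (forall y, differentiable f y) -> differentiable ('D_v f) x ->
  (forall y, f y <= f x) -> 'D_v f x = 0 /\ 'D_v ('D_v f) x <= 0.
Proof.
move=> df ddf fmax; have [dl ddl <-] := derive2_line df ddf.
have := @derive2_le0_at_max (fun r : R => f (r *: v + x)) 0 dl ddl.
rewrite (derive_line f) !scale0r !add0r; apply=> s; exact: fmax.
Qed.

Lemma derive1_le0_at_right_end_min (k : R -> R) a t : a < t -> derivable k t 1 ->
  (forall s, a <= s <= t -> k t <= k s) -> derive1 k t <= 0.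
Proof.
move=> at_lt dk kmin.
rewrite derive1E ['D_1 k t]cvg_at_leftE; last exact: dk.
apply: limr_le.
  rewrite -(cvg_at_leftE (fun h => h^-1 *: ((k \o shift t) _ - k t))) //.
  apply: cvg_trans dk; apply: cvg_app.
  move=> A [e e_gt0 Ae]; exists e => // h he h_lt0; apply: Ae => //.
  exact/ltr0_neq0.
near=> h.
have h_lt0 : h < 0 by near: h; exists 1 => /=.
have h_gt : a - t < h.
  near: h; exists (t - a); first by rewrite /= subr_gt0.
  move=> /= y; rewrite /ball_ /= sub0r normrN => hy y_lt0.
  have := ler_norm (- y); rewrite normrN; lra.
rewrite /= [h%:A]mulr1; apply: mulr_le0_ge0; first by rewrite invr_le0 ltW.
by rewrite subr_ge0; apply: kmin; apply/andP; split; lra.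
Unshelve. all: by end_near.
Qed.

Lemma is_derive_mulr (c s : R) : is_derive s 1 ( *%R c) c.
Proof. by rewrite -[X in is_derive _ _ _ X]mulr1; apply: is_deriveZ. Qed.

Lemma is_derive_expRM (a s : R) :
  is_derive s 1 (fun r => expR (a * r)) (a * expR (a * s)).
Proof.
by rewrite mulrC; exact: (is_derive1_comp (f := expR) (is_derive_expR _) (is_derive_mulr a s)).
Qed.

Lemma is_derive1_continuous (f : R -> R) (x df : R) :
  is_derive x 1 f df -> {for x, continuous f}.
Proof. by case=> fx _; apply/differentiable_continuous/derivable1_diffP. Qed.

End RealCalculus.

Section Torus.
Context {R : realType} {d : nat}.
Local Notation V := 'rV[R]_d.

Definition unit_cube : set V := [set v | forall i, [set` `[0 : R, 1]] (v ord0 i)].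

Lemma unit_cube_compact : compact unit_cube.
Proof.
by apply: (@rV_compact _ _ (fun _ => [set` `[0 : R, 1]])) => i; exact: segment_compact.
Qed.

Lemma unit_cube0 : unit_cube 0.
Proof. by move=> i; rewrite mxE /= in_itv /= lexx ler01. Qed.

Lemma Zd_periodic_unit_cube {W : Type} (f : V -> W) :
  Zd_periodic f -> forall x, exists2 y, unit_cube y & f x = f y.
Proof.
move=> f_per x; pose z := map_mx (fun r => Num.floor r) x.
exists (x - map_mx (fun n : int => n%:~R) z); last by rewrite -[RHS](f_per _ z) subrK.
move=> i /=; rewrite !mxE in_itv /= subr_ge0 floor_le /=.
by have := floorD1_gt (x ord0 i); rewrite intrD mulr1z; lra.
Qed.

Lemma derive_coord (f : V -> V) x v i : derivable f x v ->
  derivable (fun y => f y ord0 i) x v /\ 'D_v (fun y => f y ord0 i) x = 'D_v f x ord0 i.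
Proof.
move=> df.
have coord_cvg : (fun h : R => h^-1 *: (((fun y => f y ord0 i) \o shift x) (h *: v)
    - f x ord0 i)) @ 0^' --> 'D_v f x ord0 i.
  rewrite (_ : (fun h : R => _) = (fun M : V => M ord0 i) \o
      (fun h : R => h^-1 *: ((f \o shift x) (h *: v) - f x))); last first.
    by apply/funext => h /=; rewrite !mxE.
  by apply: continuous_cvg; [exact: coord_continuous | exact: df].
by split; [apply/cvg_ex; exists ('D_v f x ord0 i) | exact: cvg_lim].
Qed.

Lemma ord1_0 : (0 : 'I_1) = ord0.
Proof. exact: val_inj. Qed.

Lemma continuous_divergence (F : V -> V) : Ck 1 F -> continuous (divergence F).
Proof.
move=> [dF cF].
have -> : divergence F = fun x => \sum_(i < d) 'D_(e_ i) F x ord0 i.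
  apply/funext => x; apply: eq_bigr => i _.
  by rewrite ord1_0; exact: (derive_coord i (diff_derivable (dF x))).2.
apply: (@continuous_big _ _ +%R 0 xpredT add_continuous) => i _ x.
exact: (continuous_comp (cF (e_ i) x) (@coord_continuous R 1 d ord0 i _)).
Qed.

Lemma divergenceZ_at_critical (g : V -> R) (F : V -> V) x :
  (forall i, derivable g x (e_ i)) -> (forall i, derivable F x (e_ i)) ->
  (forall i, 'D_(e_ i) g x = 0) ->
  divergence (fun y => g y *: F y) x = g x * divergence F x.
Proof.
move=> dg dF g'0; rewrite /divergence mulr_sumr; apply: eq_bigr => i _.
have -> : (fun y => (g y *: F y) 0 i) = g * (fun y => F y 0 i).
  by apply/funext => y; rewrite !mxE.
have dFi : derivable (fun y => F y 0 i) x (e_ i).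
  by rewrite ord1_0; exact: (derive_coord i (dF i)).1.
by rewrite deriveM // g'0 scaler0 addr0.
Qed.

Lemma laplacian_ge0_at_min (f : V -> R) x : Ck 2 f ->
  (forall y, f x <= f y) -> 0 <= laplacian f x.
Proof.
move=> [df d2f] fmin; rewrite /laplacian; apply: sumr_ge0 => i _.
by have [ddf _] := d2f (e_ i); have [] := directional_derive2_ge0_at_min df (ddf x) fmin.
Qed.

Lemma laplacian_le0_at_max (f : V -> R) x : Ck 2 f ->
  (forall y, f y <= f x) -> laplacian f x <= 0.
Proof.
move=> [df d2f] fmax; rewrite /laplacian; apply: sumr_le0 => i _.
by have [ddf _] := d2f (e_ i); have [] := directional_derive2_le0_at_max df (ddf x) fmax.
Qed.

End Torus.

Section Comparison.
Context {R : realType} {d : nat}.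
Local Notation V := 'rV[R]_d.

(* The contradiction at a nonpositive minimum of the weighted gap: [a] and [p] are the
   values of [u] and of the barrier there, [Dx] the value of [D]. *)
Lemma logistic_drift_gt (a p Dx M U : R) :
  0 < p -> p <= 1 -> a <= p -> `|a| <= U -> `|Dx| <= M ->
  (2 * M * (1 + U) + 1) * (a - p) < - 2 * (a * (1 - a) * Dx) + (2 * M + 1) * p.
Proof.
move=> p_gt0 p_le1 a_le_p; rewrite !ler_norml => /andP [Ua aU] /andP [MD DM].
have MU_ge0 : 0 <= M * U by apply: mulr_ge0; lra.
have [a_ge0 | a_lt0] := leP 0 a.
- have q_le : a * (1 - a) * Dx <= p * M.
    apply: (le_trans (ler_wpM2l _ DM)); first by apply: mulr_ge0; lra.
    by apply: ler_wpM2r; nra.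
  have : (2 * M * (1 + U) + 1) * (a - p) <= 0 by apply: mulr_ge0_le0; lra.
  lra.
- have q_le : a * (1 - a) * Dx <= - a * (1 + U) * M.
    apply: (le_trans (ler_wnM2l _ MD)); first by nra.
    by rewrite mulrN -mulNr; apply: ler_wpM2r; nra.
  nra.
Qed.

Variables (u : R -> V -> R) (D : V -> R) (M eps0 T : R).
Hypotheses (eps0_gt0 : 0 < eps0) (eps0_le1 : eps0 <= 1) (T_ge0 : 0 <= T)
  (D_bound : forall x, unit_cube x -> `|D x| <= M)
  (u_per : forall t, 0 <= t -> Zd_periodic (u t))
  (u_cont : {within [set p : R * V | 0 <= p.1], continuous (fun p => u p.1 p.2)})
  (u_init : forall x, eps0 <= u 0 x)
  (u_derivable : forall t x, 0 < t -> derivable (fun s => u s x) t 1)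
  (u_super : forall t x, 0 < t -> (forall y, u t x <= u t y) ->
      - 2 * (u t x * (1 - u t x) * D x) <= derive1 (fun s => u s x) t).

Let cylinder : set (R * V) := [set` `[0, T]] `*` unit_cube.
Let barrier (t : R) := eps0 / 2 * expR (- (2 * M + 1) * t).

Lemma cylinder_compact : compact cylinder.
Proof. by apply: compact_setX; [exact: segment_compact | exact: unit_cube_compact]. Qed.

Lemma cylinder_neq0 : cylinder !=set0.
Proof. by exists (0, 0); split; [rewrite /= in_itv /= lexx | exact: unit_cube0]. Qed.

Lemma continuous_on_cylinder : {within cylinder, continuous (fun p => u p.1 p.2)}.
Proof.
by apply: continuous_subspaceW u_cont => -[s y] [] /=; rewrite in_itv /= => /andP [].
Qed.

Lemma M_ge0 : 0 <= M.
Proof. exact: le_trans (normr_ge0 _) (D_bound unit_cube0). Qed.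

Lemma barrier_gt0 t : 0 < barrier t.
Proof. by rewrite mulr_gt0 ?divr_gt0 ?expR_gt0. Qed.

Lemma barrier_le t s : 0 <= t <= s -> barrier s <= barrier t.
Proof.
move=> /andP [t_ge0 ts]; rewrite ler_pM2l ?divr_gt0 // ler_expR.
by have := M_ge0; nra.
Qed.

Lemma is_derive_barrier (t : R) : is_derive t 1 barrier (- (2 * M + 1) * barrier t).
Proof.
rewrite /barrier mulrCA.
exact: (is_derive1_comp (f := *%R (eps0 / 2)) (is_derive_mulr _ _) (is_derive_expRM _ t)).
Qed.

Section WeightedGap.
Variables (U : R) (U_bound : forall p, cylinder p -> `|u p.1 p.2| <= U).
(* Where [u < 0] the drift [-2 u (1 - u) D] is only bounded below by [2 M (1 + U) u],
   a term the time weight [expR (- lam t)] absorbs. *)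
Let lam := 2 * M * (1 + U) + 1.
Let weighted_gap (p : R * V) := expR (- lam * p.1) * (u p.1 p.2 - barrier p.1).

Lemma is_derive_weighted_gap (t : R) x : 0 < t ->
  is_derive t 1 (fun s => weighted_gap (s, x)) (expR (- lam * t) *
    (derive1 (fun s => u s x) t + (2 * M + 1) * barrier t - lam * (u t x - barrier t))).
Proof.
move=> t_gt0.
have du : is_derive t 1 (fun s => u s x) (derive1 (fun s => u s x) t).
  by rewrite derive1E; apply: derivableP; exact: u_derivable.
have -> : (fun s => weighted_gap (s, x)) =
    (fun s => expR (- lam * s)) * ((fun s => u s x) - barrier) by [].
apply: is_derive_eq (is_deriveM (is_derive_expRM _ t) (is_deriveB du (is_derive_barrier t))) _.
have -> : ((fun s => u s x) - barrier) t = u t x - barrier t by [].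
by rewrite /GRing.scale /=; ring.
Qed.

Lemma weighted_gap_gt0_at_min ts xs : cylinder (ts, xs) ->
  (forall s y, 0 <= s <= ts -> unit_cube y -> weighted_gap (ts, xs) <= weighted_gap (s, y)) ->
  0 < weighted_gap (ts, xs).
Proof.
move=> [/= ts_in xs_in] gap_min; rewrite ltNge; apply/negP => gap_le0.
have /andP [ts_ge0 _] : 0 <= ts <= T by move: ts_in; rewrite in_itv.
have u_le : u ts xs <= barrier ts.
  by move: gap_le0; rewrite pmulr_rle0 ?expR_gt0 // subr_le0.
have [ts0 | ts_gt0] := eqVneq ts 0.
  move: u_le; rewrite ts0 /barrier mulr0 expR0 mulr1 => u_le.
  by have := le_trans (u_init xs) u_le; have := eps0_gt0; lra.
have {ts_gt0} ts_gt0 : 0 < ts by rewrite lt0r ts_gt0.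
have umin y : u ts xs <= u ts y.
  have [y' y'_in ->] := Zd_periodic_unit_cube (u_per ts_ge0) y.
  have := gap_min ts y'; rewrite lexx ts_ge0 => /(_ isT y'_in).
  by rewrite ler_pM2l ?expR_gt0 // lerD2r.
have gap_dt : derive1 (fun s => weighted_gap (s, xs)) ts <= 0.
  apply: (derive1_le0_at_right_end_min (a := 0)) => [//||s s_in].
  - by have [] := is_derive_weighted_gap xs ts_gt0.
  - exact: gap_min.
have [_ gap_dt_val] := is_derive_weighted_gap xs ts_gt0.
rewrite derive1E gap_dt_val in gap_dt.
rewrite pmulr_rle0 ?expR_gt0 // in gap_dt.
have barrier_le1 : barrier ts <= 1.
  apply: le_trans (@barrier_le 0 ts _) _; first by rewrite lexx ts_ge0.
  by rewrite /barrier mulr0 expR0 mulr1; have := eps0_le1; lra.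
have drift := logistic_drift_gt (barrier_gt0 ts) barrier_le1 u_le
  (@U_bound (ts, xs) (conj ts_in xs_in)) (D_bound xs_in).
have super := u_super ts_gt0 umin.
set ut := derive1 (fun s => u s xs) ts in gap_dt super.
by rewrite /lam in gap_dt; lra.
Qed.

Lemma continuous_weighted_gap : {within cylinder, continuous weighted_gap}.
Proof.
have time_cont (g : R -> R) : continuous g -> continuous (fun p : R * V => g p.1).
  by move=> g_cont p; apply: continuous_comp (g_cont _); exact: cvg_fst.
have exp_cont a : continuous (fun s : R => expR (a * s)).
  by move=> s; exact: is_derive1_continuous (is_derive_expRM a s).
have barrier_cont : continuous barrier.
  by move=> s; exact: is_derive1_continuous (is_derive_barrier s).
move=> p; apply: cvgM; first exact: continuous_subspaceT (time_cont _ (exp_cont _)) p.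
apply: cvgB; first exact: continuous_on_cylinder.
exact: continuous_subspaceT (time_cont _ barrier_cont) p.
Qed.

Lemma weighted_gap_gt0 p : cylinder p -> 0 < weighted_gap p.
Proof.
have [[ts xs] pm_in gap_min] :=
  compact_EVT_min cylinder_neq0 cylinder_compact continuous_weighted_gap.
have [ts_in xs_in] : cylinder (ts, xs) by rewrite inE in pm_in.
have pm_gt0 : 0 < weighted_gap (ts, xs).
  apply: weighted_gap_gt0_at_min => // s y /andP [s_ge0 s_le] y_in.
  apply: gap_min; rewrite inE; split => //=.
  by move: ts_in; rewrite !in_itv /= s_ge0 => /andP [_ ts_le]; exact: le_trans s_le ts_le.
by move=> p_in; apply: lt_le_trans pm_gt0 (gap_min p _); rewrite inE.
Qed.

End WeightedGap.

Lemma supersolution_ge_barrier t x : 0 <= t <= T -> barrier T <= u t x.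
Proof.
move=> t_in; have /andP [t_ge0 t_le] := t_in.
have [pU _ U_max] := compact_EVT_max cylinder_neq0 cylinder_compact
  (fun p => continuous_comp (@continuous_on_cylinder p) (@norm_continuous _ R^o _)).
have U_bound p : cylinder p -> `|u p.1 p.2| <= `|u pU.1 pU.2|.
  by move=> p_in; apply: U_max; rewrite inE.
have [y y_in ->] := Zd_periodic_unit_cube (u_per t_ge0) x.
have ty_in : cylinder (t, y) by split => //=; rewrite in_itv /= t_in.
have := weighted_gap_gt0 U_bound ty_in.
rewrite pmulr_rgt0 ?expR_gt0 // subr_gt0 /= => /ltW; apply: le_trans.
exact: barrier_le.
Qed.

End Comparison.

Section LogisticEquation.
Context {R : realType} {d : nat}.
Local Notation V := 'rV[R]_d.
Variables (F : V -> V) (u0 : V -> R) (u : R -> V -> R) (M eps0 T : R).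
Hypotheses (F_C1 : Ck 1 F) (u_sol : is_solution F u0 u)
  (D_bound : forall x, unit_cube x -> `|divergence F x| <= M)
  (eps0_gt0 : 0 < eps0) (eps0_le1 : eps0 <= 1) (T_ge0 : 0 <= T).

Lemma solution_at_critical t x : 0 < t -> (forall i, 'D_(e_ i) (u t) x = 0) ->
  derive1 (fun s => u s x) t =
    laplacian (u t) x - 2 * (u t x * (1 - u t x) * divergence F x).
Proof.
move=> t_gt0 u'0; have [_ _ _ u_reg u_pde] := u_sol.
have [[du _] _] := u_reg t t_gt0.
have du_x i : derivable (u t) x (e_ i) := diff_derivable (du x).
have du1_x i : derivable (cst 1 - u t) x (e_ i).
  exact: derivableB (derivable_cst (1 : R) x (e_ i)) (du_x i).
rewrite u_pde // (@divergenceZ_at_critical _ _ (u t * (cst 1 - u t))) ?mulrA //.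
- by move=> i; exact: derivableM.
- by move=> i; have [dF _] := F_C1; exact: diff_derivable.
- move=> i; rewrite deriveM // (deriveB (derivable_cst (1 : R) x (e_ i)) (du_x i)).
  by rewrite derive_cst u'0 subr0 !scaler0 addr0.
Qed.

Lemma solution_time_derivative_at_min t x : 0 < t -> (forall y, u t x <= u t y) ->
  - 2 * (u t x * (1 - u t x) * divergence F x) <= derive1 (fun s => u s x) t.
Proof.
move=> t_gt0 umin; have [_ _ _ u_reg _] := u_sol.
have [u_C2 _] := u_reg t t_gt0; have [du d2u] := u_C2.
rewrite solution_at_critical //.
- by have := laplacian_ge0_at_min u_C2 umin; lra.
- move=> i; have [ddu _] := d2u (e_ i).
  by have [] := directional_derive2_ge0_at_min du (ddu x) umin.
Qed.

Lemma solution_time_derivative_at_max t x : 0 < t -> (forall y, u t y <= u t x) ->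
  derive1 (fun s => u s x) t <= - 2 * (u t x * (1 - u t x) * divergence F x).
Proof.
move=> t_gt0 umax; have [_ _ _ u_reg _] := u_sol.
have [u_C2 _] := u_reg t t_gt0; have [du d2u] := u_C2.
rewrite solution_at_critical //.
- by have := laplacian_le0_at_max u_C2 umax; lra.
- move=> i; have [ddu _] := d2u (e_ i).
  by have [] := directional_derive2_le0_at_max du (ddu x) umax.
Qed.

Lemma solution_ge_barrier t x : (forall y, eps0 <= u0 y) -> 0 <= t <= T ->
  eps0 / 2 * expR (- (2 * M + 1) * T) <= u t x.
Proof.
move=> u0_ge; have [u_per u_cont u_init u_reg _] := u_sol.
apply: (supersolution_ge_barrier eps0_gt0 eps0_le1 T_ge0 D_bound u_per u_cont).
- by move=> y; rewrite u_init.
- by move=> s y s_gt0; have [_] := u_reg s s_gt0; apply.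
- by move=> s y s_gt0 umin; exact: solution_time_derivative_at_min.
Qed.

Lemma solution_le_compl_barrier t x : (forall y, u0 y <= 1 - eps0) -> 0 <= t <= T ->
  u t x <= 1 - eps0 / 2 * expR (- (2 * M + 1) * T).
Proof.
move=> u0_le; have [u_per u_cont u_init u_reg _] := u_sol.
have u_der s y : 0 < s -> derivable (fun r => u r y) s 1.
  by move=> s_gt0; have [_] := u_reg s s_gt0; apply.
rewrite lerBrDl -lerBrDr.
apply: (@supersolution_ge_barrier _ _ (fun s y => 1 - u s y) (fun y => - divergence F y) _ _ _
  eps0_gt0 eps0_le1 T_ge0).
- by move=> y y_in; rewrite normrN; exact: D_bound.
- by move=> s s_ge0 y z; rewrite /= (u_per s s_ge0).
- by move=> p; apply: cvgB; [exact: cvg_cst | exact: u_cont].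
- by move=> y; rewrite u_init lerBrDl -lerBrDr.
- by move=> s y s_gt0; exact: derivableB (derivable_cst _ _ _) (u_der s y s_gt0).
- move=> s y s_gt0 compl_min.
  have umax z : u s z <= u s y by have := compl_min z; rewrite lerD2l lerN2.
  have -> : derive1 (fun r => 1 - u r y) s = - derive1 (fun r => u r y) s.
    rewrite !derive1E (deriveB (derivable_cst (1 : R) s 1) (u_der s y s_gt0)).
    by rewrite derive_cst sub0r.
  have := solution_time_derivative_at_max s_gt0 umax.
  set ut := derive1 _ s; set a := u s y; set Dy := divergence F y => ut_le.
  have -> : - 2 * ((1 - a) * (1 - (1 - a)) * - Dy) = - (- 2 * (a * (1 - a) * Dy)) by ring.
  by rewrite lerN2.
Qed.

End LogisticEquation.

Theorem lemmaB3 (R : realType) (d : nat) (F : 'rV[R]_d -> 'rV[R]_d)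
    (hF : smooth F) (hFper : Zd_periodic F)
    (eps0 : R) (heps0 : 0 < eps0) (T : R) (hT : 0 < T) :
  exists eps1 : R, 0 < eps1 /\
    forall (u0 : 'rV[R]_d -> R), smooth u0 -> Zd_periodic u0 ->
      (forall x, eps0 <= u0 x <= 1 - eps0) ->
      forall u : R -> 'rV[R]_d -> R, is_solution F u0 u ->
        forall t x, 0 <= t <= T -> eps1 <= u t x <= 1 - eps1.
Proof.
have F_C1 : Ck 1 F := hF 1%N.
have div_cont := continuous_divergence F_C1.
have [xM _ M_max] := compact_EVT_max (ex_intro _ 0 unit_cube0) unit_cube_compact
  (continuous_subspaceT (fun x => continuous_comp (div_cont x) (@norm_continuous _ R^o _))).
have D_bound x : unit_cube x -> `|divergence F x| <= `|divergence F xM|.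
  by move=> x_in; apply: M_max; rewrite inE.
exists (eps0 / 2 * expR (- (2 * `|divergence F xM| + 1) * T)).
split; first by rewrite mulr_gt0 ?divr_gt0 ?expR_gt0.
move=> u0 _ _ u0_bounds u u_sol t x t_in.
have eps0_le1 : eps0 <= 1 by have /andP [] := u0_bounds 0; lra.
apply/andP; split.
- apply: (solution_ge_barrier F_C1 u_sol D_bound heps0 eps0_le1 (ltW hT)) => // y.
  by have /andP [] := u0_bounds y.
- apply: (solution_le_compl_barrier F_C1 u_sol D_bound heps0 eps0_le1 (ltW hT)) => // y.
  by have /andP [] := u0_bounds y.
Qed.
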